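(* Fix $k\in\mathbb{N}$ and let $\alpha=\alpha(n)\in(0,\infty)$. If $\alpha/\sqrt{n}\to\infty$ as $n\to\infty$, then $d_{TV}(M_{n,k}^{\alpha},M_{n,k}^{\infty})\to 0$ as $n\to\infty$.
   Context: A $k$-out map on $[n]$ is a map $M:[n]\to[n]^k$, viewed as a digraph on $[n]$ in which each vertex has $k$ out-arcs labeled $1,\dots,k$; $\mathcal{M}_{n,k}$ denotes the set of all such maps. The in-degree $d_j$ of vertex $j$ is the total number of coordinates, over all vertices $i$ and all $k$ labels, of $M(i)$ equal to $j$ (so $d_1+\dots+d_n=kn$). For $\alpha\in(0,\infty)$, the random $k$-out map $M_{n,k}^{\alpha}$ is generated by inserting $kn$ out-arcs, $k$ per vertex: every vertex starts with weight $\alpha$; at each step a vertex whose out-degree is below $k$ picks its next image $j$ with probability proportional to the current weight of $j$, and the weight of $j$ then increases by $1$. Its law is $P(M_{n,k}^{\alpha}=M)=\prod_{j=1}^n \alpha^{\overline{d_j}}/(\alpha n)^{\overline{kn}}$, where $(d_1,\dots,d_n)$ is the in-degree sequence of $M$ and $x^{\overline{y}}=x(x+1)\cdots(x+y-1)$. $M_{n,k}^{\infty}$ denotes the uniformly random element of $\mathcal{M}_{n,k}$ (probability $n^{-kn}$ each). $d_{TV}(M_{n,k}^{\alpha},M_{n,k}^{\infty})=\sup_{\mathcal{A}\subseteq\mathcal{M}_{n,k}}|P(M_{n,k}^{\alpha}\in\mathcal{A})-P(M_{n,k}^{\infty}\in\mathcal{A})|=\frac12\sum_{M\in\mathcal{M}_{n,k}}|P(M_{n,k}^{\alpha}=M)-P(M_{n,k}^{\infty}=M)|$.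 *)

From HB Require Import structures.
From mathcomp Require Import all_boot all_order all_algebra.
From mathcomp Require Import all_classical all_reals all_analysis.
Set Implicit Arguments. Unset Strict Implicit. Unset Printing Implicit Defensive.
Import Order.TTheory GRing.Theory Num.Theory.
Local Open Scope ring_scope.

Definition kout_map (n k : nat) := {ffun 'I_n -> k.-tuple 'I_n}.

Definition indeg (n k : nat) (M : kout_map n k) (j : 'I_n) : nat :=
  #|[set p : 'I_n * 'I_k | tnth (M p.1) p.2 == j]|.

Definition rising {R : pzRingType} (x : R) (y : nat) : R :=
  \prod_(i < y) (x + i%:R).

Definition prob_alpha {R : realType} (n k : nat) (alpha : R) (M : kout_map n k) : R :=
  (\prod_(j < n) rising alpha (indeg M j)) / rising (alpha * n%:R) (k * n).

Definition prob_unif {R : realType} (n k : nat) (M : kout_map n k) : R :=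
  (n%:R ^+ (k * n))^-1.

Definition dTV {R : realType} (n k : nat) (alpha : R) : R :=
  2^-1 * \sum_(M : kout_map n k) `|prob_alpha alpha M - @prob_unif R n k M|.

From HB Require Import structures.
From mathcomp Require Import all_boot all_order all_algebra.
From mathcomp Require Import all_classical all_reals all_analysis.
From mathcomp Require Import ring lra zify.
Import Order.TTheory GRing.Theory Num.Theory numFieldNormedType.Exports.

Set Implicit Arguments. Unset Strict Implicit. Unset Printing Implicit Defensive.
Local Open Scope classical_set_scope.
Local Open Scope ring_scope.

(* Flattening a k-out map row by row identifies M^alpha with the Polya urn word
   of length m = kn over n colours (each letter is drawn with weight alpha plus
   its number of earlier occurrences) and M^infty with a uniform word.
   Comparing the products defining both laws, log (n^-m / P_alpha(t)) <= Y(t)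
   := C(m,2)/(alpha n) - A1(t)/alpha + A2(t)/alpha^2, where A1 counts pairs of
   equal letters and A2 sums the squares of the earlier counts.  Summing
   |p - q| <= e (p + q) + (p - q + q Y)/(2e), valid whenever p >= q exp(-Y), gives
   sum |p - q| <= 2e + E_unif[Y]/(2e).  Under the uniform law E[A1] = C(m,2)/n
   cancels the first term of Y and E[A2] <= (n m^2 + m^3)/n^2, so that
   d_TV <= e + (k^2 + k^3) n / (4 e alpha^2), which is small once alpha/sqrt n
   is large. *)

Section RealInequalities.
Variable R : realType.
Implicit Types p q e x Y : R.

Lemma normB_le_sqrtB p q e : 0 <= p -> 0 <= q -> 0 < e ->
  `|p - q| <= e * (p + q) + (Num.sqrt p - Num.sqrt q) ^+ 2 / (2 * e).
Proof.
move=> p0 q0 e0.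
set a := Num.sqrt p; set b := Num.sqrt q.
have a0 : 0 <= a by exact: sqrtr_ge0.
have b0 : 0 <= b by exact: sqrtr_ge0.
have ha : a ^+ 2 = p by rewrite sqr_sqrtr.
have hb : b ^+ 2 = q by rewrite sqr_sqrtr.
have -> : p - q = (a - b) * (a + b) by rewrite -ha -hb; ring.
rewrite normrM (ger0_norm (addr_ge0 a0 b0)) -(ler_pM2l (_ : 0 < 2 * e)); last lra.
have -> : 2 * e * (e * (p + q) + (a - b) ^+ 2 / (2 * e)) =
    2 * e ^+ 2 * (a ^+ 2 + b ^+ 2) + (a - b) ^+ 2.
  by rewrite -ha -hb; field; lra.
(* AM-GM: 2 e |a - b| (a + b) <= e^2 (a + b)^2 + (a - b)^2
   <= 2 e^2 (a^2 + b^2) + (a - b)^2. *)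
have hd : `|a - b| ^+ 2 = (a - b) ^+ 2 by rewrite real_normK // num_real.
have := sqr_ge0 (e * (a + b) - `|a - b|).
have := sqr_ge0 (a - b).
nra.
Qed.

Lemma sqrtB_sqr_le p q Y : 0 <= p -> 0 <= q -> q * expR (- Y) <= p ->
  (Num.sqrt p - Num.sqrt q) ^+ 2 <= p - q + q * Y.
Proof.
move=> p0 q0 hp.
have c1 : 1 - Y / 2 <= expR (- (Y / 2)) by have := expR_ge1Dx (- (Y / 2)); lra.
(* sqrt (p q) >= q exp (-Y/2) >= q (1 - Y/2) *)
have hpq : q * expR (- (Y / 2)) <= Num.sqrt p * Num.sqrt q.
  rewrite -(@ler_pXn2r _ 2) ?nnegrE ?mulr_ge0 ?sqrtr_ge0 ?expR_ge0 //.
  rewrite !exprMn !sqr_sqrtr // -expRM_natl.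
  have -> : 2 * - (Y / 2) = - Y by field.
  by rewrite expr2 -mulrA [p * q]mulrC ler_wpM2l.
rewrite sqrrB !sqr_sqrtr //.
nra.
Qed.

Lemma normB_le_expR p q Y e : 0 <= p -> 0 <= q -> 0 < e -> q * expR (- Y) <= p ->
  `|p - q| <= e * (p + q) + (p - q + q * Y) / (2 * e).
Proof.
move=> p0 q0 e0 hp; apply: (le_trans (normB_le_sqrtB p0 q0 e0)).
by rewrite lerD2l ler_pM2r ?invr_gt0 ?mulr_gt0 // sqrtB_sqr_le.
Qed.

Lemma sum_normB_le (T : finType) (p q Y : T -> R) e : 0 < e ->
  (forall t, 0 <= p t) -> (forall t, 0 <= q t) ->
  (forall t, q t * expR (- Y t) <= p t) ->
  \sum_t p t = 1 -> \sum_t q t = 1 ->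
  \sum_t `|p t - q t| <= 2 * e + (\sum_t q t * Y t) / (2 * e).
Proof.
move=> e0 p0 q0 hpq sp sq.
apply: (le_trans (ler_sum _ (fun t _ => normB_le_expR (p0 t) (q0 t) e0 (hpq t)))).
rewrite big_split /= -mulr_sumr -mulr_suml !big_split /= sumrN sp sq subrr add0r.
by rewrite (_ : 1 + 1 = 2) // mulrC.
Qed.
End RealInequalities.

Lemma risingS (R : pzRingType) (a : R) m : rising a m.+1 = rising a m * (a + m%:R).
Proof. by rewrite /rising big_ord_recr. Qed.

Lemma rising_ge0 (R : numDomainType) (a : R) m : 0 <= a -> 0 <= rising a m.
Proof. by move=> a0; apply: prodr_ge0 => i _; rewrite addr_ge0. Qed.

Lemma rising_gt0 (R : numDomainType) (a : R) m : 0 < a -> 0 < rising a m.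
Proof. by move=> a0; apply: prodr_gt0 => i _; rewrite ltr_wpDr. Qed.

Lemma rising_le_expR (R : realType) (b : R) m : 0 < b ->
  rising b m <= b ^+ m * expR ('C(m, 2)%:R / b).
Proof.
move=> b0; elim: m => [|m IH]; first by rewrite /rising big_ord0 mul0r expR0 mulr1.
rewrite risingS binS bin1 natrD mulrDl expRD exprS.
have hm : b + m%:R <= b * expR (m%:R / b).
  have -> : b + m%:R = b * (1 + m%:R / b) by field; rewrite lt0r_neq0.
  by rewrite ler_pM2l // expR_ge1Dx.
rewrite [X in _ <= X](_ : _ = (b ^+ m * expR ('C(m, 2)%:R / b)) * (b * expR (m%:R / b)));
  last by ring.
apply: ler_pM => //; first exact: rising_ge0 (ltW b0).
exact: addr_ge0 (ltW b0) (ler0n _ _).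
Qed.

Lemma expR_subX_le1D (R : realType) (x : R) : 0 <= x -> expR (x - x ^+ 2) <= 1 + x.
Proof.
move=> x0.
have h1 : x - x ^+ 2 <= x / (1 + x).
  rewrite ler_pdivlMr; last by lra.
  have : 0 <= x ^+ 3 by exact: exprn_ge0.
  rewrite !exprS expr0 !mulr1 => h.
  have -> : (x - x * x) * (1 + x) = x - x * (x * x) by ring.
  lra.
rewrite -ler_expR in h1; apply: (le_trans h1).
have h2 := expR_ge1Dx (- (x / (1 + x))).
have E : 1 + - (x / (1 + x)) = (1 + x)^-1.
  by field; rewrite lt0r_neq0 //; lra.
rewrite E expRN in h2.
move: h2; rewrite lef_pV2 ?posrE ?expR_gt0 //; lra.
Qed.

Section TupleSums.
Variable T : finType.
Implicit Types (s : seq T) (v : T).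

Lemma big_tuple0 (R : Type) (idx : R) (op : Monoid.com_law idx) (F : 0.-tuple T -> R) :
  \big[op/idx]_(t : 0.-tuple T) F t = F [tuple].
Proof. by rewrite (big_pred1 [tuple]) // => t /=; apply/esym/eqP; exact: tuple0. Qed.

Lemma big_tuple_cons (R : Type) (idx : R) (op : Monoid.com_law idx) m
    (F : m.+1.-tuple T -> R) :
  \big[op/idx]_(t : m.+1.-tuple T) F t =
  \big[op/idx]_(v : T) \big[op/idx]_(t : m.-tuple T) F [tuple of v :: t].
Proof.
rewrite pair_big /= (reindex (fun p : T * m.-tuple T => [tuple of p.1 :: p.2])) //=.
exists (fun t => (thead t, [tuple of behead t])) => [[v t]|t] _ /=.
  by congr pair; apply: val_inj.
by rewrite [RHS]tuple_eta.
Qed.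

Lemma sum_count_mem s : (\sum_(j : T) count_mem j s)%N = size s.
Proof.
elim: s => [|v s IH] /=; first by rewrite big1.
rewrite big_split /= IH (bigD1 v) //= eqxx big1 // => j.
by rewrite eq_sym => /negbTE ->.
Qed.

Fixpoint pair_collisions s : nat :=
  if s is v :: s' then (pair_collisions s' + count_mem v s')%N else 0%N.

Fixpoint sqr_collisions s : nat :=
  if s is v :: s' then (sqr_collisions s' + count_mem v s' ^ 2)%N else 0%N.

Definition sum_sqr_counts s : nat := (\sum_(j : T) count_mem j s ^ 2)%N.

Lemma sum_sqr_counts_cons v s :
  sum_sqr_counts (v :: s) = (sum_sqr_counts s + 2 * count_mem v s + 1)%N.
Proof.
rewrite /sum_sqr_counts (bigD1 v) //= [in RHS](bigD1 v) //= eqxx.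
rewrite (eq_bigr (fun j => count_mem j s ^ 2)%N); last first.
  by move=> j /negbTE; rewrite eq_sym => ->.
set S := (\sum_(j | j != v) _)%N; rewrite add1n; lia.
Qed.

Lemma sum_tuple_const m (c : nat) : (\sum_(t : m.-tuple T) c)%N = (c * #|T| ^ m)%N.
Proof. by rewrite sum_nat_const card_tuple mulnC. Qed.

Lemma sum_pair_collisions m :
  (#|T| * \sum_(t : m.-tuple T) pair_collisions t = #|T| ^ m * 'C(m, 2))%N.
Proof.
elim: m => [|m IH]; first by rewrite big_tuple0 muln0.
rewrite big_tuple_cons exchange_big /=.
rewrite (eq_bigr (fun t : m.-tuple T => #|T| * pair_collisions t + m)%N); last first.
  move=> t _; rewrite big_split /= sum_nat_const sum_count_mem size_tuple.
  by rewrite mulnC.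
rewrite big_split /= -big_distrr /= sum_tuple_const mulnDr IH binS bin1 expnS.
set N := #|T|; set P := (N ^ m)%N; set C := 'C(m, 2); ring.
Qed.

Lemma sum_sqr_counts_le m :
  (#|T| * \sum_(t : m.-tuple T) sum_sqr_counts t <= #|T| ^ m * (#|T| * m + m ^ 2))%N.
Proof.
elim: m => [|m IH]; first by rewrite big_tuple0 /sum_sqr_counts big1 ?muln0.
rewrite big_tuple_cons exchange_big /=.
rewrite (eq_bigr (fun t : m.-tuple T => #|T| * sum_sqr_counts t + (2 * m + #|T|))%N);
  last first.
  move=> t _; under eq_bigr do rewrite sum_sqr_counts_cons.
  rewrite !big_split /= big1_eq sum_count_mem size_tuple sum1_card sum_nat_const.
  rewrite (_ : #|xpredT| = #|T|) //; lia.
rewrite big_split /= -big_distrr /= sum_tuple_const expnS.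
have := leq_mul (leqnn #|T|) IH.
set S := (\sum_(_ : m.-tuple T) _)%N; set P := (#|T| ^ m)%N; set N := #|T|; nia.
Qed.

Lemma sum_sqr_collisions_le m :
  (#|T| ^ 2 * \sum_(t : m.-tuple T) sqr_collisions t <=
   #|T| ^ m * (#|T| * m ^ 2 + m ^ 3))%N.
Proof.
elim: m => [|m IH]; first by rewrite big_tuple0 muln0.
rewrite big_tuple_cons exchange_big /=.
rewrite (eq_bigr (fun t : m.-tuple T => #|T| * sqr_collisions t + sum_sqr_counts t)%N);
  last first.
  by move=> t _; rewrite big_split /= sum_nat_const mulnC.
rewrite big_split /= -big_distrr /= mulnDr mulnA [(_ * #|T|)%N]mulnC -mulnA.
have := leq_mul (leqnn #|T|) IH; have := sum_sqr_counts_le m.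
rewrite !expnS !expn0 !muln1.
set S1 := (\sum_(_ : m.-tuple T) sqr_collisions _)%N.
set S2 := (\sum_(_ : m.-tuple T) sum_sqr_counts _)%N.
set P := (#|T| ^ m)%N; set N := #|T|; nia.
Qed.

End TupleSums.

Section PolyaWeight.
Variable T : finType.
Implicit Types (s : seq T) (v : T).

Definition polya_weight {R : comPzRingType} (a : R) s : R :=
  \prod_(j : T) rising a (count_mem j s).

Lemma polya_weight_cons (R : comPzRingType) (a : R) v s :
  polya_weight a (v :: s) = polya_weight a s * (a + (count_mem v s)%:R).
Proof.
rewrite /polya_weight (bigD1 v) //= [in RHS](bigD1 v) //= eqxx add1n risingS.
rewrite mulrAC -!mulrA; congr (_ * (_ * _)).
by apply: eq_bigr => j /negbTE; rewrite eq_sym => ->.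
Qed.

Lemma sum_polya_weight (R : comPzRingType) (a : R) m :
  \sum_(t : m.-tuple T) polya_weight a t = rising (a * #|T|%:R) m.
Proof.
elim: m => [|m IH].
  by rewrite big_tuple0 /polya_weight /rising big_ord0 big1 // => j _; exact: big_ord0.
rewrite big_tuple_cons exchange_big /= risingS -IH mulr_suml.
apply: eq_bigr => t _; under eq_bigr do rewrite polya_weight_cons.
rewrite -mulr_sumr big_split /= sumr_const -natr_sum sum_count_mem size_tuple.
by rewrite mulr_natr.
Qed.

Lemma polya_weight_ge (R : realType) (a : R) s : 0 < a ->
  a ^+ size s * expR ((pair_collisions s)%:R / a - (sqr_collisions s)%:R / a ^+ 2)
    <= polya_weight a s.
Proof.
move=> a0; elim: s => [|v s IH].
  by rewrite /polya_weight /= !mul0r subrr expR0 mulr1 big1 // => j _; exact: big_ord0.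
rewrite polya_weight_cons /= !natrD natrX.
set c := (count_mem v s)%:R : R.
have hc : a * expR (c / a - c ^+ 2 / a ^+ 2) <= a + c.
  have -> : a + c = a * (1 + c / a) by field; rewrite lt0r_neq0.
  rewrite ler_pM2l // -expr_div_n.
  exact: expR_subX_le1D (divr_ge0 (ler0n _ _) (ltW a0)).
rewrite (_ : _ / a - _ / a ^+ 2 =
    ((pair_collisions s)%:R / a - (sqr_collisions s)%:R / a ^+ 2) +
    (c / a - c ^+ 2 / a ^+ 2)); last by ring.
rewrite expRD exprS [a * _]mulrC mulrACA.
by apply: ler_pM => //; rewrite ?mulr_ge0 ?expR_ge0 ?exprn_ge0 ?ltW.
Qed.

End PolyaWeight.

Section PolyaUniform.
Variables (T : finType) (R : realType).
Hypothesis T_gt0 : (0 < #|T|)%N.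
Variable a : R.
Hypothesis a_gt0 : 0 < a.
Implicit Types (s : seq T).

Let N : R := #|T|%:R.

Let N_gt0 : 0 < N. Proof. by rewrite ltr0n. Qed.

Definition polya_exponent s : R :=
  'C(size s, 2)%:R / (a * N) - (pair_collisions s)%:R / a + (sqr_collisions s)%:R / a ^+ 2.

Lemma polya_prob_ge s :
  (N ^+ size s)^-1 * expR (- polya_exponent s) <=
  polya_weight a s / rising (a * N) (size s).
Proof.
set m := size s; set b := a * N.
have b_gt0 : 0 < b by rewrite mulr_gt0.
pose E1 := expR ((pair_collisions s)%:R / a - (sqr_collisions s)%:R / a ^+ 2).
pose E2 := expR ('C(m, 2)%:R / b).
have -> : (N ^+ m)^-1 * expR (- polya_exponent s) = a ^+ m * E1 / (b ^+ m * E2).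
  rewrite /polya_exponent -/b -/m.
  rewrite (_ : - ('C(m, 2)%:R / b - _ + _) =
      (pair_collisions s)%:R / a - (sqr_collisions s)%:R / a ^+ 2 - 'C(m, 2)%:R / b);
    last by ring.
  rewrite expRB -/E1 -/E2 exprMn.
  by field; rewrite !lt0r_neq0 ?exprn_gt0 ?expR_gt0.
apply: ler_pM.
- by rewrite mulr_ge0 ?expR_ge0 // exprn_ge0 // ltW.
- by rewrite invr_ge0 mulr_ge0 ?expR_ge0 // exprn_ge0 // ltW.
- exact: polya_weight_ge.
- by rewrite lef_pV2 ?posrE ?rising_gt0 ?mulr_gt0 ?exprn_gt0 ?expR_gt0 // rising_le_expR.
Qed.

Lemma sum_polya_exponent_le m :
  \sum_(t : m.-tuple T) (N ^+ m)^-1 * polya_exponent t <=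
  (#|T| * m ^ 2 + m ^ 3)%:R / (N ^+ 2 * a ^+ 2).
Proof.
set P := N ^+ m.
have P_gt0 : 0 < P by rewrite exprn_gt0.
set S1 : R := (\sum_(t : m.-tuple T) pair_collisions t)%:R.
set S2 : R := (\sum_(t : m.-tuple T) sqr_collisions t)%:R.
have hS1 : S1 = P * 'C(m, 2)%:R / N.
  have := congr1 (fun x : nat => x%:R : R) (sum_pair_collisions T m).
  by rewrite /= !natrM natrX -/N -/P -/S1 => <-; field; rewrite lt0r_neq0.
have hS2 : N ^+ 2 * S2 <= P * (#|T| * m ^ 2 + m ^ 3)%:R.
  by have := sum_sqr_collisions_le T m; rewrite -(ler_nat R) !natrM !natrX.
rewrite -mulr_sumr.
under eq_bigr do rewrite /polya_exponent size_tuple.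
rewrite !big_split /= sumrN sumr_const card_tuple -!mulr_suml -!natr_sum -/S1 -/S2 hS1.
rewrite -[_ *+ _]mulr_natr natrX -/N -/P.
have D_gt0 : 0 < N ^+ 2 * a ^+ 2 by rewrite mulr_gt0 ?exprn_gt0.
rewrite [X in X <= _](_ : _ = (N ^+ 2 * S2) / P / (N ^+ 2 * a ^+ 2)); last first.
  by field; rewrite !lt0r_neq0.
by rewrite ler_pM2r ?invr_gt0 // ler_pdivrMr // [X in _ <= X]mulrC.
Qed.

Lemma sum_normB_polya_unif m e : 0 < e ->
  \sum_(t : m.-tuple T) `|polya_weight a t / rising (a * N) m - (N ^+ m)^-1| <=
  2 * e + ((#|T| * m ^ 2 + m ^ 3)%:R / (N ^+ 2 * a ^+ 2)) / (2 * e).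
Proof.
move=> e_gt0.
have Z_gt0 : 0 < rising (a * N) m by rewrite rising_gt0 ?mulr_gt0.
have P_gt0 : 0 < N ^+ m by rewrite exprn_gt0.
apply: (le_trans (sum_normB_le (Y := fun t : m.-tuple T => polya_exponent t) e_gt0 _ _ _ _ _)).
- move=> t; rewrite divr_ge0 ?(ltW Z_gt0) // /polya_weight.
  by apply: prodr_ge0 => j _; exact: rising_ge0 (ltW a_gt0).
- by move=> t; rewrite invr_ge0 (ltW P_gt0).
- by move=> t; have := polya_prob_ge t; rewrite size_tuple.
- by rewrite -mulr_suml sum_polya_weight divff // lt0r_neq0.
- by rewrite sumr_const card_tuple -mulr_natr natrX mulVf // lt0r_neq0.
- by rewrite lerD2l ler_pM2r ?invr_gt0 ?mulr_gt0 // sum_polya_exponent_le.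
Qed.

End PolyaUniform.

Section Flattening.
Variables n k : nat.
Implicit Type M : kout_map n k.

Let shape_kout M : shape [seq tval (M i) | i <- enum 'I_n] = nseq n k.
Proof.
rewrite /shape -map_comp (eq_map (_ : _ =1 fun=> k)); last by move=> i /=; rewrite size_tuple.
rewrite -[in RHS](size_enum_ord n); by elim: (enum 'I_n) => //= i s ->.
Qed.

Lemma flatten_kout_subproof M : size (flatten [seq tval (M i) | i <- enum 'I_n]) == (k * n)%N.
Proof. by rewrite size_flatten shape_kout sumn_nseq. Qed.

Definition flatten_kout M : (k * n).-tuple 'I_n := Tuple (flatten_kout_subproof M).

Lemma indeg_flatten_kout M j : indeg M j = count_mem j (flatten_kout M).
Proof.
rewrite /= count_flatten -map_comp sumnE big_map big_enum /indeg -sum1dep_card.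
rewrite -(pair_big_dep xpredT (fun i l => tnth (M i) l == j) (fun _ _ => 1%N)) /=.
by apply: eq_bigr => i _; rewrite -sum1_count big_tuple.
Qed.

Lemma flatten_kout_inj : injective flatten_kout.
Proof.
move=> M1 M2 /(congr1 (reshape (nseq n k) \o val)) /=.
rewrite -{1}(shape_kout M1) -(shape_kout M2) !flattenK => eqM.
apply/ffunP => i; apply: val_inj.
by move/(eq_in_map _ _ _).2: eqM; apply; rewrite mem_enum.
Qed.

Lemma flatten_kout_bij : bijective flatten_kout.
Proof.
apply: inj_card_bij; first exact: flatten_kout_inj.
by rewrite card_tuple card_ffun !card_ord card_tuple card_ord -expnM mulnC.
Qed.

End Flattening.

Lemma dTV_polya_weight (R : realType) n k (a : R) :
  dTV n k a = 2^-1 * \sum_(t : (k * n).-tuple 'I_n)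
     `|polya_weight a t / rising (a * n%:R) (k * n) - (n%:R ^+ (k * n))^-1|.
Proof.
rewrite /dTV (reindex (@flatten_kout n k)) /=; last exact: onW_bij (flatten_kout_bij n k).
congr (_ * _); apply: eq_bigr => M _.
rewrite /prob_alpha /prob_unif /polya_weight; congr (`| _ / _ - _ |).
by apply: eq_bigr => j _; rewrite indeg_flatten_kout.
Qed.

Lemma dTV_ge0 (R : realType) n k (a : R) : 0 <= dTV n k a.
Proof. by rewrite /dTV mulr_ge0 ?invr_ge0 ?ler0n ?sumr_ge0. Qed.

Lemma dTV_le (R : realType) n k (a e : R) : (0 < n)%N -> 0 < a -> 0 < e ->
  dTV n k a <= e + (k ^ 2 + k ^ 3)%:R * (n%:R / a ^+ 2) / (4 * e).
Proof.
move=> n_gt0 a_gt0 e_gt0.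
have := sum_normB_polya_unif (T := 'I_n) _ a_gt0 (k * n) e_gt0.
rewrite card_ord dTV_polya_weight => /(_ n_gt0) bound.
apply: le_trans (ler_wpM2l _ bound) _; first by rewrite invr_ge0 ler0n.
rewrite le_eqVlt; apply/orP; left; apply/eqP.
rewrite !natrD !natrM; field.
by rewrite !lt0r_neq0 // ltr0n.
Qed.

Lemma near_mul_le_sqr (R : realType) (alpha : nat -> R) (c : R) :
  (fun n : nat => alpha n / Num.sqrt n%:R) @ \oo --> +oo ->
  \forall n \near \oo, c * n%:R <= alpha n ^+ 2.
Proof.
move=> halpha; set M := 1 + `|c|.
have M_ge1 : 1 <= M by rewrite lerDl.
near=> n.
have n_gt0 : (0 < n)%N by near: n; exact: nbhs_infty_gt.
have : M <= alpha n / Num.sqrt n%:R by near: n; exact: cvgry_ge halpha M.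
have s_gt0 : 0 < Num.sqrt (n%:R : R) by rewrite sqrtr_gt0 ltr0n.
rewrite ler_pdivlMr // => hMa.
have : (M * Num.sqrt n%:R) ^+ 2 <= alpha n ^+ 2.
  have Ms_ge0 : 0 <= M * Num.sqrt (n%:R : R) := mulr_ge0 (le_trans ler01 M_ge1) (ltW s_gt0).
  by rewrite ler_pXn2r ?nnegrE // (le_trans Ms_ge0).
rewrite exprMn sqr_sqrtr ?ler0n //; apply: le_trans.
have cM : `|c| <= M by rewrite lerDr.
rewrite ler_wpM2r ?ler0n // (le_trans (ler_norm c)) // (le_trans cM) //.
by rewrite expr2 ler_peMl // (le_trans ler01).
Unshelve. all: end_near.
Qed.

Theorem theorem1 (R : realType) (k : nat) (alpha : nat -> R)
  (alpha_pos : forall n, 0 < alpha n)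
  (halpha : (fun n : nat => alpha n / Num.sqrt (n%:R)) @ \oo --> +oo) :
  (fun n : nat => dTV n k (alpha n)) @ \oo --> 0.
Proof.
apply/cvgrPdist_le => eps eps_gt0.
set C : R := (k ^ 2 + k ^ 3)%:R.
near=> n.
have n_gt0 : (0 < n)%N by near: n; exact: nbhs_infty_gt.
have hC : C / eps ^+ 2 * n%:R <= alpha n ^+ 2 by near: n; exact: near_mul_le_sqr.
rewrite sub0r normrN ger0_norm ?dTV_ge0 //.
have e_gt0 : 0 < eps / 2 by rewrite divr_gt0.
apply: (le_trans (dTV_le k n_gt0 (alpha_pos n) e_gt0)).
have a2_gt0 : 0 < alpha n ^+ 2 by rewrite exprn_gt0.
have ratio_le1 : C / eps ^+ 2 * n%:R / alpha n ^+ 2 <= 1 by rewrite ler_pdivrMr // mul1r.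
rewrite [X in _ + X <= _](_ : _ = C / eps ^+ 2 * n%:R / alpha n ^+ 2 * (eps / 2)).
  by rewrite [X in _ <= X](splitr eps) lerD2l ler_piMl // ltW.
by rewrite -/C; field; rewrite !lt0r_neq0.
Unshelve. all: end_near.
Qed.
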